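(* For any $M>1$ there exists $\kappa_0'=\kappa_0'(M)>0$ such that for all $0\le\kappa\le\kappa_0'$ and all integers $1\le m<M$, there exists $\lambda_1>0$ (depending on $\kappa$ and $m$) such that $$1=\frac1{2m}\int_{-1}^1\frac{-\varphi_\kappa'(\bar z)}{1+\lambda_1-\bar z}\,d\bar z.$$ Moreover, for fixed $m$ and $\kappa$ this solution is unique and satisfies $\lambda_1\ge\lambda^*(M)>0$, where $\lambda^*(M)$ depends only on $M$ (not on $\kappa$ or $m$).
   Context: Fix $\Theta\in C^\infty(\mathbb{R})$, $\Theta>0$ on $(-1,1)$, $\operatorname{supp}\Theta\subset(-1,1)$, $\int\Theta=1$. For $\kappa>0$: $\Theta_\kappa(z)=\kappa^{-1}\Theta(z/\kappa)$, $\psi'_\kappa(z)=\int_{-1+\kappa}^{1-\kappa}\Theta_\kappa(z-\bar z)d\bar z$, and $\varphi_\kappa(z)=1-\int_{-1}^z\psi'_\kappa/\int_{-1}^1\psi'_\kappa$ for $z\in[-1,1]$; for $\kappa=0$, $\varphi_0(z)=(1-z)/2$. *)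

From Stdlib Require Import Reals.
From Coquelicot Require Import Coquelicot.
Open Scope R_scope.

Definition Theta_k (Theta : R -> R) (k z : R) : R := / k * Theta (z / k).

Definition psi'_k (Theta : R -> R) (k z : R) : R :=
  RInt (fun zb => Theta_k Theta k (z - zb)) (-1 + k) (1 - k).

Definition phi_k (Theta : R -> R) (k z : R) : R :=
  if Req_EM_T k 0 then (1 - z) / 2
  else 1 - RInt (psi'_k Theta k) (-1) z / RInt (psi'_k Theta k) (-1) 1.

Definition lambda_eq (Theta : R -> R) (k : R) (m : nat) (l : R) : Prop :=
  1 = / (2 * INR m) *
      RInt (fun zb => - Derive (phi_k Theta k) zb / (1 + l - zb)) (-1) 1.

(* For kappa > 0, -phi_kappa' is psi'_kappa / int psi'_kappa, where
   psi'_kappa(z) = F(z + 1 - kappa) - F(z - 1 + kappa) and F is the distribution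
   function of Theta_kappa; hence -phi_kappa' is a continuous probability density on
   [-1, 1] which, for kappa <= 1/4, is at least 1/2 on [-1 + 2 kappa, 1 - 2 kappa]
   (for kappa = 0 it is the constant 1/2).  For such a density g, the transform
   S(s) = int g(z) / (s - z) dz is continuous and strictly decreasing on (1, oo), with
   S(2) <= 1 < 2m, while the lower bound on the middle interval gives
   S(s) >= 1/2 ln ((s + 1 - 2 kappa) / (s - 1 + 2 kappa)), which exceeds 2M at
   s = 1 + lambda* when kappa <= lambda* = 1 / (4 e^(4M)).  The intermediate value
   theorem yields the unique root s of S(s) = 2m, and lambda_1 = s - 1 >= lambda*. *)

From Stdlib Require Import Reals Lra FunctionalExtensionality.
From Coquelicot Require Import Coquelicot.
Open Scope R_scope.

Lemma continuous_of_ex_derive (f : R -> R) x : ex_derive f x -> continuous f x.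
Proof. exact (ex_derive_continuous f x). Qed.

Lemma ex_RInt_of_continuous (f : R -> R) a b :
  (forall z, Rmin a b <= z <= Rmax a b -> continuous f z) -> ex_RInt f a b.
Proof. exact (ex_RInt_continuous f a b). Qed.

Lemma RInt_const_R (c a b : R) : @eq R (RInt (fun _ => c) a b) ((b - a) * c).
Proof. rewrite RInt_const. reflexivity. Qed.

Lemma RInt_Chasles_R (f : R -> R) a b c :
  ex_RInt f a b -> ex_RInt f b c -> @eq R (RInt f a c) (RInt f a b + RInt f b c).
Proof. intros Hab Hbc. symmetry. exact (RInt_Chasles f a b c Hab Hbc). Qed.

Lemma RInt_inv_sub (s c d : R) : c <= d < s ->
  @eq R (RInt (fun z => / (s - z)) c d) (ln (s - c) - ln (s - d)).
Proof.
  intros Hcd.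
  assert (Hz : forall z, Rmin c d <= z <= Rmax c d -> z < s).
  { intros z Hz. rewrite Rmax_right in Hz; lra. }
  apply is_RInt_unique.
  replace (ln (s - c) - ln (s - d)) with (minus (- ln (s - d)) (- ln (s - c)))
    by (unfold minus, plus, opp; simpl; ring).
  apply (is_RInt_derive (fun z => - ln (s - z))).
  - intros z Hzcd. specialize (Hz z Hzcd). auto_derive; [lra | field; lra].
  - intros z Hzcd. specialize (Hz z Hzcd). apply continuous_of_ex_derive. auto_derive. lra.
Qed.

Section Mollifier.

Variable Theta : R -> R.
Hypothesis Theta_continuous : forall x, continuous Theta x.
Hypothesis Theta_ge0 : forall x, 0 <= Theta x.
Hypothesis Theta_supp : forall z, Theta z <> 0 -> -1 < z < 1.
Hypothesis RInt_Theta : RInt Theta (-1) 1 = 1.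
Variable k : R.
Hypothesis k_gt0 : 0 < k.

Lemma Theta_k_continuous x : continuous (Theta_k Theta k) x.
Proof.
  apply (@continuous_mult R_UniformSpace R_AbsRing (fun _ => / k) (fun x => Theta (x / k))).
  - apply continuous_const.
  - apply (continuous_comp (fun x => x / k) Theta); [|apply Theta_continuous].
    apply continuous_of_ex_derive. auto_derive. lra.
Qed.

Lemma Theta_k_ge0 x : 0 <= Theta_k Theta k x.
Proof.
  apply Rmult_le_pos; [|apply Theta_ge0].
  apply Rlt_le, Rinv_0_lt_compat, k_gt0.
Qed.

Lemma Theta_k_eq0 u : k <= Rabs u -> Theta_k Theta k u = 0.
Proof.
  intros Hu. unfold Theta_k.
  destruct (Req_dec (Theta (u / k)) 0) as [H0|Hne]; [rewrite H0; ring|].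
  exfalso. apply Theta_supp in Hne.
  assert (Habs : Rabs (u / k) < 1) by (apply Rabs_def1; lra).
  unfold Rdiv in Habs. rewrite Rabs_mult, Rabs_inv, (Rabs_pos_eq k) in Habs by lra.
  apply (Rmult_lt_compat_r k) in Habs; [|lra].
  rewrite Rmult_assoc, Rinv_l in Habs by lra. lra.
Qed.

Lemma ex_RInt_Theta_k a b : ex_RInt (Theta_k Theta k) a b.
Proof. apply ex_RInt_of_continuous. intros; apply Theta_k_continuous. Qed.

Lemma RInt_Theta_k : RInt (Theta_k Theta k) (-k) k = 1.
Proof.
  rewrite <- RInt_Theta.
  assert (E := RInt_comp_lin Theta (/ k) 0 (-k) k).
  replace (/ k * - k + 0) with (-1) in E by (field; lra).
  replace (/ k * k + 0) with 1 in E by (field; lra).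
  rewrite <- E by (apply ex_RInt_of_continuous; intros; apply Theta_continuous).
  apply RInt_ext. intros z _. unfold Theta_k, scal; simpl; unfold mult; simpl.
  f_equal. f_equal. unfold Rdiv. ring.
Qed.

Definition Theta_k_cdf (x : R) : R := RInt (Theta_k Theta k) (-k) x.

Lemma RInt_Theta_k_cdf a b :
  @eq R (RInt (Theta_k Theta k) a b) (Theta_k_cdf b - Theta_k_cdf a).
Proof.
  unfold Theta_k_cdf. rewrite (RInt_Chasles_R _ (-k) a b) by apply ex_RInt_Theta_k. lra.
Qed.

Lemma Theta_k_cdf_eq0 x : x <= -k -> Theta_k_cdf x = 0.
Proof.
  intros Hx. unfold Theta_k_cdf.
  rewrite (RInt_ext _ (fun _ => 0)), RInt_const_R; [lra|].
  intros z Hz. rewrite Rmin_right, Rmax_left in Hz by lra.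
  apply Theta_k_eq0. rewrite Rabs_left; lra.
Qed.

Lemma Theta_k_cdf_eq1 x : k <= x -> Theta_k_cdf x = 1.
Proof.
  intros Hx.
  assert (Htail : RInt (Theta_k Theta k) k x = 0).
  { rewrite (RInt_ext _ (fun _ => 0)), RInt_const_R; [lra|].
    intros z Hz. rewrite Rmin_left, Rmax_right in Hz by lra.
    apply Theta_k_eq0. rewrite Rabs_right; lra. }
  rewrite RInt_Theta_k_cdf in Htail.
  assert (H1 := RInt_Theta_k). unfold Theta_k_cdf in Htail |- *. lra.
Qed.

Lemma Theta_k_cdf_le x y : x <= y -> Theta_k_cdf x <= Theta_k_cdf y.
Proof.
  intros Hxy.
  assert (H0 : 0 <= RInt (Theta_k Theta k) x y).
  { apply RInt_ge_0; [lra | apply ex_RInt_Theta_k | intros; apply Theta_k_ge0]. }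
  rewrite RInt_Theta_k_cdf in H0. lra.
Qed.

Lemma Theta_k_cdf_bounds x : 0 <= Theta_k_cdf x <= 1.
Proof.
  rewrite <- (Theta_k_cdf_eq0 (Rmin x (-k))), <- (Theta_k_cdf_eq1 (Rmax x k))
    by (apply Rmin_r || apply Rmax_r).
  split; apply Theta_k_cdf_le; [apply Rmin_l | apply Rmax_l].
Qed.

Lemma Theta_k_cdf_continuous x : continuous Theta_k_cdf x.
Proof.
  apply continuous_of_ex_derive. exists (Theta_k Theta k x).
  apply (is_derive_RInt _ Theta_k_cdf (-k)); [|apply Theta_k_continuous].
  apply filter_forall. intros b. apply (RInt_correct (V := R_CompleteNormedModule)), ex_RInt_Theta_k.
Qed.

Lemma psi'_k_cdf z : psi'_k Theta k z = Theta_k_cdf (z + 1 - k) - Theta_k_cdf (z - 1 + k).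
Proof.
  unfold psi'_k.
  assert (E := RInt_comp_lin (Theta_k Theta k) (-1) z (-1 + k) (1 - k) (ex_RInt_Theta_k _ _)).
  replace (-1 * (-1 + k) + z) with (z + 1 - k) in E by ring.
  replace (-1 * (1 - k) + z) with (z - 1 + k) in E by ring.
  rewrite RInt_Theta_k_cdf in E.
  rewrite (RInt_scal (fun y => Theta_k Theta k (-1 * y + z))) in E.
  - unfold scal in E; simpl in E; unfold mult in E; simpl in E.
    replace (fun zb => Theta_k Theta k (z - zb)) with (fun y => Theta_k Theta k (-1 * y + z))
      by (apply functional_extensionality; intros y; f_equal; ring).
    lra.
  - apply ex_RInt_of_continuous. intros y _.
    apply (continuous_comp (fun y => -1 * y + z) (Theta_k Theta k)); [|apply Theta_k_continuous].
    apply continuous_of_ex_derive. auto_derive. trivial.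
Qed.

Lemma psi'_k_continuous z : continuous (psi'_k Theta k) z.
Proof.
  replace (psi'_k Theta k)
    with (fun z => Theta_k_cdf (z + 1 - k) - Theta_k_cdf (z - 1 + k))
    by (apply functional_extensionality; intros; symmetry; apply psi'_k_cdf).
  apply (@continuous_minus R_UniformSpace R_AbsRing R_NormedModule).
  - apply (continuous_comp (fun z => z + 1 - k)); [|apply Theta_k_cdf_continuous].
    apply continuous_of_ex_derive. auto_derive. trivial.
  - apply (continuous_comp (fun z => z - 1 + k)); [|apply Theta_k_cdf_continuous].
    apply continuous_of_ex_derive. auto_derive. trivial.
Qed.

Hypothesis k_le_quarter : k <= 1 / 4.

Lemma psi'_k_bounds z : 0 <= psi'_k Theta k z <= 1.
Proof.
  rewrite psi'_k_cdf.
  assert (Hle : Theta_k_cdf (z - 1 + k) <= Theta_k_cdf (z + 1 - k))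
    by (apply Theta_k_cdf_le; lra).
  assert (H1 := Theta_k_cdf_bounds (z + 1 - k)).
  assert (H2 := Theta_k_cdf_bounds (z - 1 + k)).
  lra.
Qed.

Lemma psi'_k_eq1 z : -1 + 2 * k <= z <= 1 - 2 * k -> psi'_k Theta k z = 1.
Proof.
  intros Hz. rewrite psi'_k_cdf, Theta_k_cdf_eq1, Theta_k_cdf_eq0; lra.
Qed.

Lemma ex_RInt_psi'_k a b : ex_RInt (psi'_k Theta k) a b.
Proof. apply ex_RInt_of_continuous. intros; apply psi'_k_continuous. Qed.

Lemma RInt_psi'_k_bounds : 1 <= RInt (psi'_k Theta k) (-1) 1 <= 2.
Proof.
  split.
  - rewrite (RInt_Chasles_R _ (-1) (-1 + 2 * k) 1), (RInt_Chasles_R _ (-1 + 2 * k) (1 - 2 * k) 1)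
      by apply ex_RInt_psi'_k.
    assert (Hleft : 0 <= RInt (psi'_k Theta k) (-1) (-1 + 2 * k)).
    { apply RInt_ge_0; [lra | apply ex_RInt_psi'_k | intros; apply psi'_k_bounds]. }
    assert (Hright : 0 <= RInt (psi'_k Theta k) (1 - 2 * k) 1).
    { apply RInt_ge_0; [lra | apply ex_RInt_psi'_k | intros; apply psi'_k_bounds]. }
    assert (Hmid : @eq R (RInt (psi'_k Theta k) (-1 + 2 * k) (1 - 2 * k)) (2 - 4 * k)).
    { rewrite (RInt_ext _ (fun _ => 1)), RInt_const_R; [lra|].
      intros z Hz. rewrite Rmin_left, Rmax_right in Hz by lra. apply psi'_k_eq1. lra. }
    lra.
  - apply Rle_trans with (RInt (fun _ => 1) (-1) 1); [|rewrite RInt_const_R; lra].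
    apply RInt_le; [lra | apply ex_RInt_psi'_k | | intros; apply psi'_k_bounds].
    apply ex_RInt_of_continuous. intros; apply continuous_const.
Qed.

Lemma Derive_phi_k z :
  - Derive (phi_k Theta k) z = psi'_k Theta k z / RInt (psi'_k Theta k) (-1) 1.
Proof.
  assert (HC := RInt_psi'_k_bounds).
  set (C := RInt (psi'_k Theta k) (-1) 1) in *.
  replace (phi_k Theta k) with (fun z => 1 - RInt (psi'_k Theta k) (-1) z / C).
  2:{ apply functional_extensionality. intros x. unfold phi_k.
      destruct (Req_EM_T k 0); [lra | reflexivity]. }
  rewrite (is_derive_unique _ z (- (psi'_k Theta k z / C))); [ring|].
  auto_derive.
  - split; [apply ex_RInt_psi'_k|]. split; [|trivial].
    apply filter_forall. intros x. apply continuity_pt_filterlim, psi'_k_continuous.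
  - field. lra.
Qed.

End Mollifier.

Definition phi_k_density (Theta : R -> R) (k z : R) : R := - Derive (phi_k Theta k) z.

Lemma phi_0_density (Theta : R -> R) z : phi_k_density Theta 0 z = 1 / 2.
Proof.
  unfold phi_k_density.
  replace (phi_k Theta 0) with (fun z => (1 - z) / 2).
  - rewrite (is_derive_unique _ z (- (1 / 2))); [ring|]. auto_derive; [trivial | field].
  - apply functional_extensionality. intros x. unfold phi_k.
    destruct (Req_EM_T 0 0); [reflexivity | lra].
Qed.

Section Density.

Variable Theta : R -> R.
Hypothesis Theta_continuous : forall x, continuous Theta x.
Hypothesis Theta_ge0 : forall x, 0 <= Theta x.
Hypothesis Theta_supp : forall z, Theta z <> 0 -> -1 < z < 1.
Hypothesis RInt_Theta : RInt Theta (-1) 1 = 1.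
Variable k : R.
Hypothesis k_bounds : 0 <= k <= 1 / 4.

Lemma phi_k_density_pos_eq : 0 < k ->
  phi_k_density Theta k = fun z => / RInt (psi'_k Theta k) (-1) 1 * psi'_k Theta k z.
Proof.
  intros Hk. apply functional_extensionality. intros z. unfold phi_k_density.
  rewrite Derive_phi_k by (assumption || lra). unfold Rdiv. ring.
Qed.

Lemma phi_k_density_continuous z : continuous (phi_k_density Theta k) z.
Proof.
  destruct (Req_dec k 0) as [->|Hk0].
  - replace (phi_k_density Theta 0) with (fun _ : R => 1 / 2).
    + apply continuous_const.
    + apply functional_extensionality. intros. symmetry. apply phi_0_density.
  - rewrite phi_k_density_pos_eq by lra.
    apply (@continuous_mult R_UniformSpace R_AbsRing); [apply continuous_const|].
    apply psi'_k_continuous; (assumption || lra).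
Qed.

Lemma phi_k_density_ge0 z : 0 <= phi_k_density Theta k z.
Proof.
  destruct (Req_dec k 0) as [->|Hk0]; [rewrite phi_0_density; lra|].
  rewrite phi_k_density_pos_eq by lra.
  apply Rmult_le_pos.
  - apply Rlt_le, Rinv_0_lt_compat.
    enough (1 <= RInt (psi'_k Theta k) (-1) 1) by lra.
    apply RInt_psi'_k_bounds; (assumption || lra).
  - apply psi'_k_bounds; (assumption || lra).
Qed.

Lemma RInt_phi_k_density : RInt (phi_k_density Theta k) (-1) 1 = 1.
Proof.
  destruct (Req_dec k 0) as [->|Hk0].
  - rewrite (RInt_ext _ (fun _ => 1 / 2)), RInt_const_R; [lra|].
    intros; apply phi_0_density.
  - rewrite phi_k_density_pos_eq by lra.
    assert (HC : 1 <= RInt (psi'_k Theta k) (-1) 1)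
      by (apply RInt_psi'_k_bounds; (assumption || lra)).
    rewrite (RInt_scal (psi'_k Theta k)) by (apply ex_RInt_psi'_k; (assumption || lra)).
    apply Rinv_l. lra.
Qed.

Lemma phi_k_density_ge_half z :
  -1 + 2 * k <= z <= 1 - 2 * k -> 1 / 2 <= phi_k_density Theta k z.
Proof.
  intros Hz.
  destruct (Req_dec k 0) as [->|Hk0]; [rewrite phi_0_density; lra|].
  rewrite phi_k_density_pos_eq by lra.
  rewrite psi'_k_eq1 by (assumption || lra).
  assert (HC : RInt (psi'_k Theta k) (-1) 1 <= 2)
    by (apply RInt_psi'_k_bounds; (assumption || lra)).
  assert (HC1 : 1 <= RInt (psi'_k Theta k) (-1) 1)
    by (apply RInt_psi'_k_bounds; (assumption || lra)).
  rewrite Rmult_1_r. replace (1 / 2) with (/ 2) by field.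
  apply Rinv_le_contravar; lra.
Qed.

End Density.

Section Stieltjes.

Variable g : R -> R.
Hypothesis g_continuous : forall z, continuous g z.
Hypothesis g_ge0 : forall z, -1 <= z <= 1 -> 0 <= g z.

Definition stieltjes (s : R) : R := RInt (fun z => g z / (s - z)) (-1) 1.

Lemma ex_RInt_stieltjes s a b : 1 < s -> a <= 1 -> b <= 1 ->
  ex_RInt (fun z => g z / (s - z)) a b.
Proof.
  intros Hs Ha Hb. apply ex_RInt_of_continuous. intros z Hz.
  assert (Hzs : z < s) by (assert (Rmax a b <= 1) by (apply Rmax_lub; lra); lra).
  apply (@continuous_mult R_UniformSpace R_AbsRing g (fun z => / (s - z))); [apply g_continuous|].
  apply continuous_of_ex_derive. auto_derive. lra.
Qed.

Lemma ex_RInt_g a b : ex_RInt g a b.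
Proof. apply ex_RInt_of_continuous. intros; apply g_continuous. Qed.

Lemma RInt_g_ge0 : 0 <= RInt g (-1) 1.
Proof. apply RInt_ge_0; [lra | apply ex_RInt_g | intros; apply g_ge0; lra]. Qed.

Lemma stieltjes_sub s s' : 1 < s -> 1 < s' ->
  stieltjes s - stieltjes s' =
  RInt (fun z => g z * ((s' - s) / ((s - z) * (s' - z)))) (-1) 1.
Proof.
  intros Hs Hs'. unfold stieltjes.
  rewrite <- (RInt_minus (fun z => g z / (s - z)) (fun z => g z / (s' - z)))
    by (apply ex_RInt_stieltjes; lra).
  apply RInt_ext. intros z Hz. rewrite Rmin_left, Rmax_right in Hz by lra.
  unfold minus, plus, opp; simpl. field. lra.
Qed.

Lemma ex_RInt_stieltjes_sub s s' : 1 < s -> 1 < s' ->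
  ex_RInt (fun z => g z * ((s' - s) / ((s - z) * (s' - z)))) (-1) 1.
Proof.
  intros Hs Hs'. apply ex_RInt_of_continuous. intros z Hz.
  rewrite Rmin_left, Rmax_right in Hz by lra.
  apply (@continuous_mult R_UniformSpace R_AbsRing g); [apply g_continuous|].
  apply continuous_of_ex_derive. auto_derive.
  apply Rmult_integral_contrapositive. lra.
Qed.

Lemma stieltjes_sub_integrand_bound s s' z : 1 < s -> 1 < s' -> -1 <= z <= 1 ->
  Rabs (g z * ((s' - s) / ((s - z) * (s' - z)))) <=
  Rabs (s' - s) / ((s - 1) * (s' - 1)) * g z.
Proof.
  intros Hs Hs' Hz.
  rewrite Rabs_mult, (Rabs_pos_eq (g z)) by (apply g_ge0; lra).
  rewrite Rmult_comm. apply Rmult_le_compat_r; [apply g_ge0; lra|].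
  unfold Rdiv. rewrite Rabs_mult, Rabs_inv, (Rabs_pos_eq ((s - z) * (s' - z))) by nra.
  apply Rmult_le_compat_l; [apply Rabs_pos|].
  apply Rinv_le_contravar; [nra|]. apply Rmult_le_compat; lra.
Qed.

Lemma stieltjes_lipschitz s s' : 1 < s -> 1 < s' ->
  Rabs (stieltjes s - stieltjes s') <=
  Rabs (s' - s) / ((s - 1) * (s' - 1)) * RInt g (-1) 1.
Proof.
  intros Hs Hs'. rewrite stieltjes_sub by assumption.
  set (c := Rabs (s' - s) / ((s - 1) * (s' - 1))).
  assert (Hbound : forall z, -1 < z < 1 ->
    - (c * g z) <= g z * ((s' - s) / ((s - z) * (s' - z))) <= c * g z).
  { intros z Hz. apply Rabs_le_between, stieltjes_sub_integrand_bound; lra. }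
  assert (Hscal : forall a, @eq R (RInt (fun z => a * g z) (-1) 1) (a * RInt g (-1) 1))
    by (intros; apply (RInt_scal g), ex_RInt_g).
  assert (Hex : forall a, ex_RInt (fun z => a * g z) (-1) 1)
    by (intros; apply (ex_RInt_scal g), ex_RInt_g).
  assert (Hex' := ex_RInt_stieltjes_sub s s' Hs Hs').
  apply Rabs_le. rewrite Ropp_mult_distr_l, <- !Hscal.
  split; apply RInt_le; try lra; try assumption; try apply Hex;
    intros z Hz; specialize (Hbound z Hz); lra.
Qed.

Lemma stieltjes_continuous s : 1 < s -> continuity_pt stieltjes s.
Proof.
  intros Hs eps Heps.
  assert (HI := RInt_g_ge0). set (I := RInt g (-1) 1) in *.
  assert (Hr : 0 < s - 1) by lra.
  (* For |x - s| < (s - 1) / 2 the Lipschitz bound is at most 2 I |x - s| / (s - 1)^2. *)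
  set (delta := eps * (s - 1) * (s - 1) / (2 * (I + 1))).
  assert (Hdelta : 0 < delta)
    by (apply Rdiv_lt_0_compat; [apply Rmult_lt_0_compat; [nra | lra] | lra]).
  exists (Rmin ((s - 1) / 2) delta). split; [apply Rmin_pos; lra|].
  intros x [_ Hx]. simpl in Hx |- *. unfold Rfunctions.R_dist in *.
  assert (Hx1 := Rmin_l ((s - 1) / 2) delta). assert (Hx2 := Rmin_r ((s - 1) / 2) delta).
  apply Rabs_def2 in Hx as Hxs.
  assert (Hd : Rabs (s - x) < delta) by (rewrite Rabs_minus_sym; lra).
  eapply Rle_lt_trans; [apply stieltjes_lipschitz; lra|]. fold I.
  assert (Hq : Rabs (s - x) / ((x - 1) * (s - 1)) < eps / (I + 1)).
  { apply Rle_lt_trans with (Rabs (s - x) / ((s - 1) / 2 * (s - 1))).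
    - unfold Rdiv. apply Rmult_le_compat_l; [apply Rabs_pos|].
      apply Rinv_le_contravar; [nra|]. apply Rmult_le_compat_r; lra.
    - replace (eps / (I + 1)) with (delta / ((s - 1) / 2 * (s - 1))) by (unfold delta; field; lra).
      unfold Rdiv at 1 2. apply Rmult_lt_compat_r; [|lra].
      apply Rinv_0_lt_compat. nra. }
  apply Rle_lt_trans with (eps / (I + 1) * I); [apply Rmult_le_compat_r; lra|].
  replace (eps / (I + 1) * I) with (eps - eps / (I + 1)) by (field; lra).
  assert (0 < eps / (I + 1)) by (apply Rdiv_lt_0_compat; lra). lra.
Qed.

Lemma stieltjes_decreasing s s' : 0 < RInt g (-1) 1 -> 1 < s -> s < s' ->
  stieltjes s' < stieltjes s.
Proof.
  intros HI Hs Hss'.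
  set (c := (s' - s) / ((s + 1) * (s' + 1))).
  assert (Hc : 0 < c) by (apply Rdiv_lt_0_compat; nra).
  enough (c * RInt g (-1) 1 <= stieltjes s - stieltjes s') by nra.
  rewrite stieltjes_sub by lra.
  rewrite <- (RInt_scal g) by apply ex_RInt_g.
  apply RInt_le; [lra | apply (ex_RInt_scal g), ex_RInt_g | apply ex_RInt_stieltjes_sub; lra |].
  intros z Hz. rewrite Rmult_comm. apply Rmult_le_compat_l; [apply g_ge0; lra|].
  unfold c, Rdiv. apply Rmult_le_compat_l; [lra|].
  apply Rinv_le_contravar; [nra|]. apply Rmult_le_compat; lra.
Qed.

Lemma stieltjes_2_le : stieltjes 2 <= RInt g (-1) 1.
Proof.
  apply RInt_le; [lra | apply ex_RInt_stieltjes; lra | apply ex_RInt_g |].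
  intros z Hz. unfold Rdiv. rewrite <- (Rmult_1_r (g z)) at 2.
  apply Rmult_le_compat_l; [apply g_ge0; lra|].
  rewrite <- Rinv_1. apply Rinv_le_contravar; lra.
Qed.

Lemma stieltjes_ge_log k s : 0 <= k <= 1 / 2 -> 1 < s ->
  (forall z, -1 + 2 * k <= z <= 1 - 2 * k -> 1 / 2 <= g z) ->
  / 2 * (ln (s + 1 - 2 * k) - ln (s - 1 + 2 * k)) <= stieltjes s.
Proof.
  intros Hk Hs Hmid. unfold stieltjes.
  rewrite (RInt_Chasles_R _ (-1) (-1 + 2 * k) 1), (RInt_Chasles_R _ (-1 + 2 * k) (1 - 2 * k) 1)
    by (apply ex_RInt_stieltjes; lra).
  assert (Hnonneg : forall a b, -1 <= a <= b -> b <= 1 ->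
            0 <= RInt (fun z => g z / (s - z)) a b).
  { intros a b Hab Hb. apply RInt_ge_0; [lra | apply ex_RInt_stieltjes; lra |].
    intros z Hz. apply Rdiv_le_0_compat; [apply g_ge0 | ]; lra. }
  assert (Hleft := Hnonneg (-1) (-1 + 2 * k) ltac:(lra) ltac:(lra)).
  assert (Hright := Hnonneg (1 - 2 * k) 1 ltac:(lra) ltac:(lra)).
  enough (/ 2 * (ln (s + 1 - 2 * k) - ln (s - 1 + 2 * k)) <=
          RInt (fun z => g z / (s - z)) (-1 + 2 * k) (1 - 2 * k)) by lra.
  replace (s + 1 - 2 * k) with (s - (-1 + 2 * k)) by ring.
  replace (s - 1 + 2 * k) with (s - (1 - 2 * k)) by ring.
  assert (Hinv : ex_RInt (fun z => / (s - z)) (-1 + 2 * k) (1 - 2 * k)).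
  { apply ex_RInt_of_continuous. intros z Hz. rewrite Rmax_right in Hz by lra.
    apply continuous_of_ex_derive. auto_derive. lra. }
  rewrite <- RInt_inv_sub, <- (RInt_scal (fun z => / (s - z))) by (assumption || lra).
  apply RInt_le; [lra | apply (ex_RInt_scal (fun z => / (s - z))), Hinv
                 | apply ex_RInt_stieltjes; lra |].
  intros z Hz. unfold Rdiv.
  apply Rmult_le_compat_r; [apply Rlt_le, Rinv_0_lt_compat; lra|].
  specialize (Hmid z ltac:(lra)). lra.
Qed.

Lemma stieltjes_solve y s0 : 0 < RInt g (-1) 1 -> 1 < s0 < 2 ->
  stieltjes 2 < y < stieltjes s0 ->
  exists s, s0 <= s /\ stieltjes s = y /\
    forall s', 1 < s' -> stieltjes s' = y -> s' = s.
Proof.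
  intros HI Hs0 Hy.
  destruct (Ranalysis5.IVT_interv (fun s => y - stieltjes s) s0 2) as [s [Hs Hys]];
    try lra.
  { intros a Ha. apply continuity_pt_minus;
      [apply continuity_pt_const; intros ? ?; reflexivity | apply stieltjes_continuous; lra]. }
  exists s. split; [lra|]. split; [lra|].
  intros s' Hs' Hys'.
  destruct (Rtotal_order s' s) as [Hlt|[Heq|Hgt]]; [|exact Heq|].
  - assert (stieltjes s < stieltjes s') by (apply stieltjes_decreasing; lra). lra.
  - assert (stieltjes s' < stieltjes s) by (apply stieltjes_decreasing; lra). lra.
Qed.

End Stieltjes.

Definition lambda_star (M : R) : R := / (4 * exp (4 * M)).

Lemma lambda_star_bounds M : 0 <= M -> 0 < lambda_star M <= 1 / 4.
Proof.
  intros HM. unfold lambda_star.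
  assert (HE := exp_ineq1_le (4 * M)).
  split; [apply Rinv_0_lt_compat; lra|].
  replace (1 / 4) with (/ 4) by field. apply Rinv_le_contravar; lra.
Qed.

Lemma stieltjes_gt_lambda_star (g : R -> R) M k :
  (forall z, continuous g z) -> (forall z, -1 <= z <= 1 -> 0 <= g z) ->
  (forall z, -1 + 2 * k <= z <= 1 - 2 * k -> 1 / 2 <= g z) ->
  0 <= M -> 0 <= k <= lambda_star M ->
  2 * M < stieltjes g (1 + lambda_star M).
Proof.
  intros Hc Hg Hmid HM Hk.
  assert (Ha := lambda_star_bounds M HM). set (a := lambda_star M) in *.
  eapply Rlt_le_trans; [|apply (stieltjes_ge_log g Hc Hg k); (assumption || lra)].
  assert (Hfar : 0 < ln (1 + a + 1 - 2 * k)) by (rewrite <- ln_1; apply ln_increasing; lra).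
  assert (Hnear : ln (1 + a - 1 + 2 * k) < - (4 * M)).
  { replace (- (4 * M)) with (ln (4 * a)).
    - apply ln_increasing; lra.
    - unfold a, lambda_star. rewrite Rinv_mult, <- Rmult_assoc, Rinv_r, Rmult_1_l by lra.
      rewrite ln_Rinv, ln_exp by apply exp_pos. reflexivity. }
  lra.
Qed.

Lemma lambda_eq_stieltjes Theta k m l : (1 <= m)%nat ->
  lambda_eq Theta k m l <-> stieltjes (phi_k_density Theta k) (1 + l) = 2 * INR m.
Proof.
  intros Hm. apply le_INR in Hm. simpl in Hm.
  change (1 = / (2 * INR m) * stieltjes (phi_k_density Theta k) (1 + l) <->
          stieltjes (phi_k_density Theta k) (1 + l) = 2 * INR m).
  split; intros Heq.
  - apply (Rmult_eq_compat_l (2 * INR m)) in Heq.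
    rewrite <- Rmult_assoc, Rinv_r, Rmult_1_l in Heq by lra. lra.
  - rewrite Heq. field. lra.
Qed.

Theorem lemma5p9 (Theta : R -> R)
  (Hsmooth : forall (n : nat) (x : R), ex_derive_n Theta n x)
  (Hpos : forall z, -1 < z < 1 -> 0 < Theta z)
  (Hsupp : forall z, Theta z <> 0 -> -1 < z < 1)
  (Hint : RInt Theta (-1) 1 = 1)
  (M : R) (HM : 1 < M) :
  exists kappa0 : R, 0 < kappa0 /\
  exists lstar : R, 0 < lstar /\
  forall kappa : R, 0 <= kappa <= kappa0 ->
  forall m : nat, (1 <= m)%nat -> INR m < M ->
  exists l1 : R, 0 < l1 /\ lambda_eq Theta kappa m l1 /\
    (forall l : R, 0 < l -> lambda_eq Theta kappa m l -> l = l1) /\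
    lstar <= l1.
Proof.
  assert (Hstar := lambda_star_bounds M ltac:(lra)).
  assert (Hcont : forall x, continuous Theta x)
    by (intros x; apply continuous_of_ex_derive, (Hsmooth 1%nat x)).
  assert (Hge0 : forall x, 0 <= Theta x).
  { intros x. destruct (Req_dec (Theta x) 0) as [H0|Hne]; [lra|].
    apply Rlt_le, Hpos, Hsupp, Hne. }
  exists (lambda_star M). split; [lra|]. exists (lambda_star M). split; [lra|].
  intros kappa Hk m Hm HmM.
  assert (Hkappa : 0 <= kappa <= 1 / 4) by lra.
  assert (Hm1 := le_INR _ _ Hm). simpl in Hm1.
  assert (Hgc := phi_k_density_continuous Theta Hcont Hge0 Hsupp Hint kappa Hkappa).
  assert (Hg0 := phi_k_density_ge0 Theta Hcont Hge0 Hsupp Hint kappa Hkappa).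
  assert (HgI := RInt_phi_k_density Theta Hcont Hge0 Hsupp Hint kappa Hkappa).
  assert (Hgmid := phi_k_density_ge_half Theta Hcont Hge0 Hsupp Hint kappa Hkappa).
  assert (H2 := stieltjes_2_le _ Hgc (fun z _ => Hg0 z)).
  assert (Hnear := stieltjes_gt_lambda_star _ M kappa Hgc (fun z _ => Hg0 z) Hgmid
                     ltac:(lra) Hk).
  destruct (stieltjes_solve _ Hgc (fun z _ => Hg0 z) (2 * INR m) (1 + lambda_star M))
    as [s [Hs [Hsol Huniq]]]; try lra.
  exists (s - 1). split; [lra|]. split; [|split; [|lra]].
  - apply lambda_eq_stieltjes; [assumption|]. now replace (1 + (s - 1)) with s by ring.
  - intros l Hl Heq. apply lambda_eq_stieltjes in Heq; [|assumption].
    specialize (Huniq (1 + l) ltac:(lra) Heq). lra.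
Qed.
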